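(* Let $V$ be a real vector space with $m=\dim V>1$, and let $A\subset V$ be a finite set spanning $V$ with $0\notin A$ and no two elements of $A$ parallel. Let $B\subset A$ be a basis of $V$ such that the graph $G(B;A)$ is connected. Then there is a compact convex polytope $C\subset V$ with nonempty interior such that (with normals taken with respect to $[\cdot,\cdot]_B$): (i) the normal of each face of $C$ is an element of $A$; (ii) there is a vertex $v$ of $C$ lying at the intersection of exactly $m$ faces of $C$, each of which is normal to some element of $B$; (iii) $v$ is the unique vertex of $C$ with property (ii).
   Context: $[\cdot,\cdot]_B$ is the inner product on $V$ for which $B$ is orthonormal. $G(B;A)$ is the graph with vertex set $B$ and an edge between distinct $x,y\in B$ whenever there is $z\in A\setminus B$ with $[x,z]_B\ne0$ and $[y,z]_B\ne0$. Faces of $C$ are its $(m-1)$-dimensional faces. *)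

From HB Require Import structures.
From mathcomp Require Import all_boot all_order all_algebra.
From mathcomp Require Import classical_sets reals.
Set Implicit Arguments. Unset Strict Implicit. Unset Printing Implicit Defensive.
Import Order.TTheory GRing.Theory Num.Theory.
Local Open Scope ring_scope.
Local Open Scope classical_set_scope.

Section Defs.
Variables (R : realType) (V : vectType R).

(* [x,y]_B : the inner product for which the basis B (a list) is orthonormal *)
Definition ipB (B : seq V) (x y : V) : R :=
  \sum_(i < size B) coord (in_tuple B) i x * coord (in_tuple B) i y.

Definition Gedge (A B : seq V) : rel V := fun x y =>
  [&& x \in B, y \in B, x != y &
      has (fun z => [&& z \notin B, ipB B x z != 0 & ipB B y z != 0]) A].

Definition Gconnected (A B : seq V) : Prop :=
  forall x y, x \in B -> y \in B ->
    exists p : seq V, path (Gedge A B) x p /\ last x p = y.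

Definition conv (P : seq V) : set V :=
  [set x | exists w : 'I_(size P) -> R,
     (forall i, 0 <= w i) /\ \sum_i w i = 1 /\ x = \sum_i w i *: P`_i].

Definition nonempty_interior (B : seq V) (C : set V) : Prop :=
  exists x0 (e : R), 0 < e /\ forall y, ipB B (y - x0) (y - x0) < e -> C y.

Definition supports (B : seq V) (C : set V) (u : V) (c : R) : Prop :=
  forall x, C x -> ipB B u x <= c.

Definition hyperface (B : seq V) (C : set V) (u : V) (c : R) : set V :=
  [set x | C x /\ ipB B u x = c].

(* (m-1)-dimensional faces (facets) of C, m = dim V *)
Definition is_facet (B : seq V) (C : set V) (F : set V) : Prop :=
  exists (u : V) (c : R), u != 0 /\ supports B C u c /\ F = hyperface B C u c /\
    exists (x0 : V) (xs : seq V), size xs = (\dim (fullv : {vspace V})).-1 /\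
      free [seq x - x0 | x <- xs] /\ F x0 /\ (forall x, x \in xs -> F x).

Definition facet_normal (B : seq V) (C : set V) (F : set V) (a : V) : Prop :=
  exists c : R, (supports B C a c \/ supports B C (- a) (- c)) /\ F = hyperface B C a c.

Definition is_vertex (B : seq V) (C : set V) (v : V) : Prop :=
  exists (u : V) (c : R), u != 0 /\ supports B C u c /\ hyperface B C u c = [set v].

Definition prop_ii (B : seq V) (C : set V) (v : V) : Prop :=
  exists F : 'I_(\dim (fullv : {vspace V})) -> set V,
    injective F /\
    (forall i, is_facet B C (F i) /\ F i v /\
               exists2 b, b \in B & facet_normal B C (F i) b) /\
    (forall G, is_facet B C G -> G v -> exists i, G = F i).

End Defs.

From HB Require Import structures.
From mathcomp Require Import all_boot all_order all_algebra.
From mathcomp Require Import classical_sets reals boolp.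
From mathcomp Require Import lra ring.
Import Order.TTheory GRing.Theory Num.Theory.
Local Open Scope ring_scope.
Local Open Scope classical_set_scope.
Set Implicit Arguments. Unset Strict Implicit. Unset Printing Implicit Defensive.

(* Writing c_j for the B-coordinates, the polytope is the box
   0 <= c_j(x) <= r^j cut by the slabs |[z_i, x]_B| <= h, where z_i is an element
   of A \ B rescaled so that c_i(z_i) = 1; it exists because b_i is not an isolated
   vertex of G(B;A).  A facet of an intersection of half-spaces lies on one of the
   defining hyperplanes, so every facet normal is a multiple of an element of A.
   The constants are chosen with h much smaller than every r^j, so at the origin
   only the m facets c_j = 0 are active.  A point on m facets with normals in B has
   every coordinate c_j equal to 0 or r^j; if i is the first nonzero one, then
   [z_i, x]_B >= r^i - O(r^(i+1)) > h, so the point is outside the polytope unless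
   it is the origin.  Finally the polytope is the convex hull of its finitely many
   basic points. *)

Section InnerProduct.
Variables (R : realType) (V : vectType R) (B : seq V).
Local Notation ip := (ipB B).
Local Notation c i x := (coord (in_tuple B) i x).

Lemma ipBC x y : ip x y = ip y x.
Proof. by rewrite /ipB; apply: eq_bigr => i _; rewrite mulrC. Qed.

Lemma ipBDr x y z : ip x (y + z) = ip x y + ip x z.
Proof. by rewrite /ipB -big_split; apply: eq_bigr => i _; rewrite linearD mulrDr. Qed.

Lemma ipBZr x a y : ip x (a *: y) = a * ip x y.
Proof. by rewrite /ipB mulr_sumr; apply: eq_bigr => i _; rewrite linearZ /= mulrCA. Qed.

Lemma ipB0r x : ip x 0 = 0.
Proof. by rewrite -(scale0r 0) ipBZr mul0r. Qed.

Lemma ipBNr x y : ip x (- y) = - ip x y.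
Proof. by rewrite -scaleN1r ipBZr mulN1r. Qed.

Lemma ipBBr x y z : ip x (y - z) = ip x y - ip x z.
Proof. by rewrite ipBDr ipBNr. Qed.

Lemma ipBDl x y z : ip (y + z) x = ip y x + ip z x.
Proof. by rewrite ipBC ipBDr !(ipBC x). Qed.

Lemma ipBZl x a y : ip (a *: y) x = a * ip y x.
Proof. by rewrite ipBC ipBZr ipBC. Qed.

Lemma ipBNl x y : ip (- y) x = - ip y x.
Proof. by rewrite ipBC ipBNr ipBC. Qed.

Lemma ipB_sumr I (r : seq I) (P : pred I) (F : I -> V) x :
  ip x (\sum_(j <- r | P j) F j) = \sum_(j <- r | P j) ip x (F j).
Proof. by elim/big_rec2: _ => [|j y1 y2 _ <-]; rewrite ?ipB0r // ipBDr. Qed.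

Lemma ipBxx_ge0 x : 0 <= ip x x.
Proof. by apply: sumr_ge0 => i _; rewrite -expr2 sqr_ge0. Qed.

Lemma norm_coord_le j x e : 0 <= e -> ip x x < e * e -> `|c j x| <= e.
Proof.
move=> e0 xx; have : c j x * c j x < e * e.
  apply: le_lt_trans xx; rewrite /ipB (bigD1 j) //= lerDl.
  by apply: sumr_ge0 => i _; rewrite -expr2 sqr_ge0.
by rewrite ler_norml => sq; apply/andP; split; nra.
Qed.

Lemma ipB_le_coord u d e :
  (forall j, `|c j d| <= e) -> ip u d <= (\sum_(j < size B) `|c j u|) * e.
Proof.
move=> de; rewrite /ipB mulr_suml; apply: le_trans (ler_norm _) _.
apply: le_trans (ler_norm_sum _ _ _) _.
by apply: ler_sum => j _; rewrite normrM ler_wpM2l.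
Qed.

Hypothesis basB : basis_of fullv B.

Lemma coordB_eq0 x : (forall j, c j x = 0) -> x = 0.
Proof.
move=> x0; rewrite (coord_basis (X := in_tuple B) basB (memvf x)).
by rewrite big1 // => i _; rewrite x0 scale0r.
Qed.

Lemma ipBxx_eq0 x : ip x x = 0 -> x = 0.
Proof.
move=> xx0; apply: coordB_eq0 => i; apply/eqP; rewrite -sqrf_eq0 expr2; apply/eqP.
apply: (psumr_eq0P (P := predT) (F := fun i => c i x * c i x)) => // j _.
by rewrite -expr2 sqr_ge0.
Qed.

Lemma ipBxx_gt0 x : x != 0 -> 0 < ip x x.
Proof.
by move=> x0; rewrite lt_def ipBxx_ge0 andbT; apply: contra x0 => /eqP /ipBxx_eq0 ->.
Qed.

Lemma ipB_nth (i : 'I_(size B)) x : ip B`_i x = c i x.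
Proof.
have cB j : c j B`_i = (i == j)%:R.
  exact: (coord_free (X := in_tuple B) i j (basis_free basB)).
rewrite /ipB (bigD1 i) //= cB eqxx mul1r big1 ?addr0 // => j ji.
by rewrite cB eq_sym (negbTE ji) mul0r.
Qed.

Lemma ipB_span0 u (D : seq V) d :
  {in D, forall e, ip u e = 0} -> d \in <<D>>%VS -> ip u d = 0.
Proof.
move=> uD /(coord_span (X := in_tuple D)) ->.
by rewrite ipB_sumr big1 // => i _; rewrite ipBZr uD ?mulr0 // mem_nth.
Qed.

Lemma orthogonal_hyperplane_line (D : seq V) u w :
  free D -> size D = (\dim (fullv : {vspace V})).-1 ->
  u != 0 -> {in D, forall e, ip u e = 0} -> {in D, forall e, ip w e = 0} ->
  exists l, w = l *: u.
Proof.
move=> fD sD u0 uD wD.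
have dim0 : (0 < \dim (fullv : {vspace V}))%N.
  by rewrite lt0n dimv_eq0; apply: contra u0 => /eqP full0; rewrite -memv0 -full0 memvf.
have uDspan : u \notin <<D>>%VS.
  by apply/negP => /(ipB_span0 uD) /ipBxx_eq0 /eqP; apply/negP.
have full : <<u :: D>>%VS = fullv.
  have /eqP fr : free (u :: D) by rewrite free_cons uDspan.
  by apply/eqP; rewrite eqEdim subvf /= fr /= sD prednK.
have : w \in <<u :: D>>%VS by rewrite full memvf.
rewrite span_cons => /memv_addP [_ /vlineP [l ->] [d dD wE]].
have : ip d d = 0.
  have := ipB_span0 wD dD.
  by rewrite wE ipBDl ipBZl (ipB_span0 uD dD) mulr0 add0r.
by move/ipBxx_eq0 => d0; exists l; rewrite wE d0 addr0.
Qed.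

End InnerProduct.

Lemma hyperface_scale (R : realType) (V : vectType R) (B : seq V) (C : set V)
    (a : V) (mu c : R) :
  mu != 0 -> hyperface B C (mu *: a) c = hyperface B C a (c / mu).
Proof.
move=> mu0; apply/seteqP; split => x [Cx e]; split => //; move: e; rewrite ipBZl.
  by move=> <-; rewrite [mu * _]mulrC mulfK.
by move=> ->; rewrite mulrC divfK.
Qed.

Section ConvexHull.
Variables (R : realType) (V : vectType R) (P : seq V).

Lemma conv_nth i : (i < size P)%N -> conv P P`_i.
Proof.
move=> ilt; exists (fun j => ((j : nat) == i)%:R); split; first by move=> j; rewrite ler0n.
split.
  rewrite (bigD1 (Ordinal ilt)) //= eqxx big1 ?addr0 // => j.
  by rewrite -val_eqE /= => /negbTE ->.
rewrite (bigD1 (Ordinal ilt)) //= eqxx scale1r big1 ?addr0 // => j.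
by rewrite -val_eqE /= => /negbTE ->; rewrite scale0r.
Qed.

Lemma conv_segment x y (t : R) : conv P x -> conv P y -> 0 <= t <= 1 ->
  conv P (t *: x + (1 - t) *: y).
Proof.
move=> [w1 [w1p [w1s ->]]] [w2 [w2p [w2s ->]]] /andP [t0 t1].
exists (fun i => t * w1 i + (1 - t) * w2 i); split.
  by move=> i; rewrite addr_ge0 // mulr_ge0 // subr_ge0.
split.
  rewrite big_split /= -!mulr_sumr w1s w2s !mulr1.
  by rewrite addrC subrK.
rewrite !scaler_sumr -big_split /=; apply: eq_bigr => i _.
by rewrite !scalerA scalerDl.
Qed.

End ConvexHull.

Definition barycenter (R : realType) (V : vectType R) (pts : seq V) : V :=
  (size pts)%:R^-1 *: \sum_(p <- pts) p.

Lemma sumr_const_seq (R : realType) (T : Type) (s : seq T) (c : R) :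
  \sum_(p <- s) c = (size s)%:R * c.
Proof. by rewrite big_const_seq count_predT iter_addr_0 mulr_natl. Qed.

Section Polyhedron.
Variables (R : realType) (V : vectType R) (B : seq V) (K : finType).
Variables (n : K -> V) (h : K -> R).
Local Notation ip := (ipB B).

Definition polyhedron : set V := [set x | forall k, ip (n k) x <= h k].
Local Notation P := polyhedron.

Lemma polyhedron_ray_exit x d : P x -> (exists k, 0 < ip (n k) d) ->
  (forall k, 0 < ip (n k) d -> ip (n k) x < h k) ->
  exists t, 0 < t /\ P (x + t *: d) /\
    exists k, ip (n k) x < h k /\ ip (n k) (x + t *: d) = h k.
Proof.
move=> Px [k0 k0d] slack.
pose exit_time k := (h k - ip (n k) x) / ip (n k) d.
pose leaving := fun k => 0 < ip (n k) d.
have [ks ks_leaving ksmin] := @arg_minP _ R K k0 leaving exit_time k0d.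
have gap k : leaving k -> 0 < h k - ip (n k) x by move=> lk; rewrite subr_gt0 slack.
exists (exit_time ks); split; first by rewrite divr_gt0 // gap.
split; last first.
  exists ks; split; first exact: slack.
  by rewrite ipBDr ipBZr /exit_time mulfVK ?subrKC // gt_eqF.
move=> k; rewrite ipBDr ipBZr.
have [lk|nlk] := boolP (leaving k).
  have : exit_time ks * ip (n k) d <= exit_time k * ip (n k) d by rewrite ler_pM2r // ksmin.
  rewrite {2}/exit_time mulfVK ?gt_eqF //; lra.
have : exit_time ks * ip (n k) d <= 0.
  apply: mulr_ge0_le0; first by apply: ltW; rewrite divr_gt0 ?gap.
  by move: nlk; rewrite /leaving ltNge negbK.
have := Px k; lra.
Qed.

Lemma conv_sub_polyhedron (Q : seq V) :
  (forall i, (i < size Q)%N -> P Q`_i) -> conv Q `<=` P.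
Proof.
move=> PQ x [w [w_ge0 [w_sum ->]]] k; rewrite ipB_sumr.
apply: (le_trans (y := \sum_i w i * h k)); last by rewrite -mulr_suml w_sum mul1r.
by apply: ler_sum => i _; rewrite ipBZr ler_wpM2l // PQ.
Qed.

Lemma polyhedron_barycenter (pts : seq V) :
  pts != [::] -> {in pts, forall p, P p} -> P (barycenter pts).
Proof.
move=> pts0 Ppts k; rewrite /barycenter ipBZr ipB_sumr.
rewrite ler_pdivrMl ?ltr0n ?lt0n ?size_eq0 // -sumr_const_seq.
by rewrite !big_seq; apply: ler_sum => p /Ppts.
Qed.

Lemma active_barycenter (pts : seq V) k :
  pts != [::] -> {in pts, forall p, P p} ->
  ip (n k) (barycenter pts) = h k -> {in pts, forall p, ip (n k) p = h k}.
Proof.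
move=> pts0 Ppts act.
have : \sum_(p <- pts) (h k - ip (n k) p) == 0.
  rewrite sumrB sumr_const_seq -act /barycenter ipBZr ipB_sumr mulVKf ?subrr //.
  by rewrite pnatr_eq0 size_eq0.
rewrite big_seq psumr_eq0 => [/allP all0 p p_pts|p /Ppts]; last by rewrite subr_ge0.
by have := all0 p p_pts; rewrite p_pts subr_eq0 => /eqP.
Qed.

Definition inactive x : {set K} := [set k | ip (n k) x < h k].
Definition active x : {set K} := [set k | ip (n k) x == h k].
Definition basic x :=
  P x /\ forall d, (forall k, ip (n k) x = h k -> ip (n k) d = 0) -> d = 0.

Lemma basic_active_inj x y : basic x -> basic y -> active x = active y -> x = y.
Proof.
move=> [_ x_basic] _ axy; apply/eqP; rewrite -subr_eq0; apply/eqP; apply: x_basic => k xk.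
have : k \in active y by rewrite -axy inE xk.
by rewrite inE => /eqP yk; rewrite ipBBr xk yk subrr.
Qed.

(* A basic point is determined by its active set (basic_active_inj), so picking one
   per subset of K lists all of them. *)
Definition basic_of_active (S : {set K}) : option V :=
  match pselect (exists x, basic x /\ active x = S) with
  | left e => Some (proj1_sig (cid e))
  | right _ => None
  end.

Definition basic_points : seq V := pmap basic_of_active (enum [set: {set K}]).

Lemma basic_of_activeP S p : basic_of_active S = Some p -> basic p.
Proof. by rewrite /basic_of_active; case: pselect => // e [<-]; case: (proj2_sig (cid e)). Qed.

Lemma basic_in_points x : basic x -> x \in basic_points.
Proof.
move=> bx; rewrite mem_pmap; apply/mapP; exists (active x); first by rewrite mem_enum in_setT.
rewrite /basic_of_active; case: pselect => [e|]; last by case; exists x.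
by have [basic_y ay] := proj2_sig (cid e); rewrite (basic_active_inj basic_y bx ay).
Qed.

Lemma basic_points_sub i : (i < size basic_points)%N -> P basic_points`_i.
Proof.
by move=> /(mem_nth 0); rewrite mem_pmap => /mapP [S _ /esym /basic_of_activeP []].
Qed.

Hypothesis normals_bound : forall d, d != 0 -> exists k, 0 < ip (n k) d.

Lemma polyhedron_step x d : P x -> d != 0 ->
  (forall k, ip (n k) x = h k -> ip (n k) d = 0) ->
  exists t, 0 < t /\ P (x + t *: d) /\ (#|inactive (x + t *: d)| < #|inactive x|)%N.
Proof.
move=> Px d0 xd.
have slack k : 0 < ip (n k) d -> ip (n k) x < h k.
  move=> kd; rewrite lt_neqAle Px andbT; apply/eqP => /xd xk.
  by move: kd; rewrite xk ltxx.
have [t [t0 [Pt [ks [ks_slack ks_hit]]]]] :=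
  polyhedron_ray_exit Px (normals_bound d0) slack.
exists t; split => //; split => //.
apply: proper_card; apply/properP; split; last by exists ks; rewrite !inE // ks_hit ltxx.
apply/fintype.subsetP => k; rewrite !inE => kt; rewrite lt_neqAle Px andbT.
by apply/eqP => xk; move: kt; rewrite ipBDr ipBZr xd // mulr0 addr0 xk ltxx.
Qed.

(* A non-basic point has a direction d along which the active constraints stay
   active; moving both ways along d until a new constraint becomes active exhibits x
   as a convex combination of two points with fewer inactive constraints. *)
Lemma polyhedron_sub_conv : P `<=` conv basic_points.
Proof.
move=> x; have [N] := ubnP #|inactive x|; elim: N x => // N IH x le_N Px.
have [bx|nbx] := pselect (basic x).
  rewrite -(nth_index 0 (basic_in_points bx)).
  by apply: conv_nth; rewrite index_mem basic_in_points.
have [d [xd d0]] : exists d, (forall k, ip (n k) x = h k -> ip (n k) d = 0) /\ d != 0.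
  apply: contrapT => nd; apply: nbx; split => // d xd; apply: contrapT => /eqP d0.
  by apply: nd; exists d.
have [t1 [t1_gt0 [P1 lt1]]] := polyhedron_step Px d0 xd.
have xNd k : ip (n k) x = h k -> ip (n k) (- d) = 0.
  by move=> /xd; rewrite ipBNr => ->; rewrite oppr0.
have Nd0 : - d != 0 by rewrite oppr_eq0.
have [t2 [t2_gt0 [P2 lt2]]] := polyhedron_step Px Nd0 xNd.
have t12 : 0 < t1 + t2 by rewrite addr_gt0.
set t := t2 / (t1 + t2).
have t01 : 0 <= t <= 1.
  by rewrite divr_ge0 ?(ltW t2_gt0) ?(ltW t12) //= ler_pdivrMr // mul1r lerDr ltW.
have e : t * t1 = (1 - t) * t2 by rewrite /t; field; rewrite gt_eqF.
have := conv_segment (IH _ (leq_trans lt1 le_N) P1) (IH _ (leq_trans lt2 le_N) P2) t01.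
congr conv.
rewrite scalerN !scalerDr scalerN !scalerA e addrACA subrr addr0 -scalerDl.
by rewrite addrC subrK scale1r.
Qed.

Lemma conv_basic_points : conv basic_points = P.
Proof.
apply/seteqP; split; first exact/conv_sub_polyhedron/basic_points_sub.
exact: polyhedron_sub_conv.
Qed.

End Polyhedron.

Section Facets.
Variables (R : realType) (V : vectType R) (B : seq V) (K : finType).
Variables (n : K -> V) (h : K -> R).
Hypothesis basB : basis_of fullv B.
Hypothesis normals_bound : forall d, d != 0 -> exists k, 0 < ipB B (n k) d.
Hypothesis normals_neq0 : forall k, n k != 0.
Local Notation ip := (ipB B).
Local Notation P := (polyhedron B n h).

Lemma supported_active u c y : u != 0 -> supports B P u c -> P y -> ip u y = c ->
  exists k, ip (n k) y = h k.
Proof.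
move=> u0 sup Py uy; apply: contrapT => inactive_y.
have slack k : 0 < ip (n k) u -> ip (n k) y < h k.
  by move=> _; rewrite lt_neqAle Py andbT; apply/eqP => yk; apply: inactive_y; exists k.
have [t [t0 [Pt _]]] := polyhedron_ray_exit Py (normals_bound u0) slack.
have := sup _ Pt; rewrite ipBDr uy ipBZr.
have : 0 < t * ip u u by rewrite mulr_gt0 // (ipBxx_gt0 basB u0).
lra.
Qed.

(* The barycenter of the m points spanning G lies in G, so some constraint k is
   active there, hence at all m points; then n k and u are both orthogonal to the
   affine hull of G, a hyperplane. *)
Lemma facet_constraint G u c : is_facet B P G -> u != 0 -> supports B P u c ->
  G = hyperface B P u c ->
  exists k l, l != 0 /\ n k = l *: u /\ G = hyperface B P (n k) (h k).
Proof.
move=> [_ [_ [_ [_ [_ [x0 [xs [sz [fr [Gx0 Gxs]]]]]]]]]] u0 sup GE.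
rewrite GE in Gx0 Gxs *; case: Gx0 => Px0 ux0.
set pts := x0 :: xs.
have face_pts : {in pts, forall p, P p /\ ip u p = c}.
  by move=> p; rewrite inE => /predU1P [->|/Gxs].
have pts0 : pts != [::] by [].
have Ppts : {in pts, forall p, P p} by move=> p /face_pts [].
have u_bary : ip u (barycenter pts) = c.
  rewrite /barycenter ipBZr ipB_sumr (eq_big_seq (fun _ => c)); last by move=> p /face_pts [].
  by rewrite sumr_const_seq mulKf // pnatr_eq0.
have [k k_bary] := supported_active u0 sup (polyhedron_barycenter pts0 Ppts) u_bary.
have k_pts := active_barycenter pts0 Ppts k_bary.
have orth_u : {in [seq x - x0 | x <- xs], forall e, ip u e = 0}.
  by move=> _ /mapP [x xs_x ->]; rewrite ipBBr (proj2 (Gxs _ xs_x)) ux0 subrr.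
have orth_k : {in [seq x - x0 | x <- xs], forall e, ip (n k) e = 0}.
  move=> _ /mapP [x xs_x ->].
  by rewrite ipBBr !k_pts ?subrr // !inE ?eqxx ?xs_x ?orbT.
have sz' : size [seq x - x0 | x <- xs] = (\dim (fullv : {vspace V})).-1 by rewrite size_map.
have [l nkE] := orthogonal_hyperplane_line basB fr sz' u0 orth_u orth_k.
have l0 : l != 0 by apply: contraNneq (normals_neq0 k); rewrite nkE => ->; rewrite scale0r.
exists k, l; split => //; split => //.
move: k_bary; rewrite nkE ipBZl u_bary => lc.
apply/seteqP; split => x [Px e]; split => //; first by rewrite ipBZl e lc.
by move: e; rewrite ipBZl -lc => /(mulfI l0).
Qed.

Lemma facet_eq_constraint_face G : is_facet B P G -> exists k, G = hyperface B P (n k) (h k).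
Proof.
move=> fG; have [u [c [u0 [sup [GE _]]]]] := fG.
by have [k [_ [_ [_ E]]]] := facet_constraint fG u0 sup GE; exists k.
Qed.

End Facets.

Lemma strict_point_nonempty_interior (R : realType) (V : vectType R) (B : seq V)
    (K : finType) (n : K -> V) (h : K -> R) p :
  (forall k, ipB B (n k) p < h k) -> nonempty_interior B (polyhedron B n h).
Proof.
move=> p_strict; have [k0 _|K0] := pickP (@predT K); last first.
  by exists p, 1; split=> // y _ k; have := K0 k.
pose S k := \sum_(j < size B) `|coord (in_tuple B) j (n k)|.
have S_ge0 k : 0 <= S k by apply: sumr_ge0 => j _.
pose radius k := (h k - ipB B (n k) p) / (1 + S k).
have [km _ kmin] := @arg_minP _ R K k0 predT radius isT.
have radius_gt0 k : 0 < radius k by rewrite divr_gt0 ?subr_gt0 // ltr_wpDr.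
exists p, (radius km * radius km); split; first by rewrite mulr_gt0.
move=> y near_y k.
have : ipB B (n k) (y - p) <= S k * radius k.
  apply: le_trans (ipB_le_coord _ (fun j => norm_coord_le j (ltW (radius_gt0 km)) near_y)) _.
  by rewrite -/(S k); apply: ler_wpM2l; [exact: S_ge0 | exact: kmin].
rewrite ipBBr /radius mulrA ler_pdivlMr ?ltr_wpDr //.
have := S_ge0 k; have := p_strict k; nra.
Qed.

Lemma free_scale (R : realType) (V : vectType R) (X : seq V) (d : R) :
  d != 0 -> free X -> free [seq d *: x | x <- X].
Proof.
move=> d0; rewrite /free size_map; congr (_ == _); congr (\dim _).
apply: subv_anti; apply/andP; split; apply/span_subvP => x.
  by move=> xX; rewrite -[x](scalerK d0); apply/memvZ/memv_span; apply: map_f.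
by move=> /mapP [y yX ->]; apply/memvZ/memv_span.
Qed.

Section Construction.
Variables (R : realType) (V : vectType R) (A B : seq V).
Hypothesis dim_gt1 : (1 < \dim (fullv : {vspace V}))%N.
Hypothesis A0 : 0 \notin A.
Hypothesis A_nonparallel :
  forall a b, a \in A -> b \in A -> a != b -> forall k : R, a != k *: b.
Hypothesis BA : {subset B <= A}.
Hypothesis basB : basis_of fullv B.
Hypothesis connB : Gconnected A B.

Local Notation m := (size B).
Local Notation c j x := (coord (in_tuple B) j x).
Local Notation ip := (ipB B).

Lemma dim_fullv : \dim (fullv : {vspace V}) = m.
Proof. exact: (size_basis (X := in_tuple B) basB). Qed.

Lemma coordB (i j : 'I_m) : c j B`_i = (i == j)%:R.
Proof. exact: (coord_free (X := in_tuple B) i j (basis_free basB)). Qed.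

Lemma nthB_in (i : 'I_m) : B`_i \in B.
Proof. exact: mem_nth. Qed.

Lemma nthB_neq0 (i : 'I_m) : B`_i != 0.
Proof. exact: basis_not0 basB (nthB_in i). Qed.

Lemma nthB_inj (i j : 'I_m) : B`_i = B`_j -> i = j.
Proof.
have uB : uniq B := free_uniq (basis_free basB).
by move=> e; apply/val_inj/eqP; rewrite -(nth_uniq 0 (ltn_ord i) (ltn_ord j) uB) e.
Qed.

Lemma nthB_index b : b \in B -> exists j : 'I_m, b = B`_j.
Proof.
move=> bB; have ib : (index b B < m)%N by rewrite index_mem.
by exists (Ordinal ib); rewrite /= nth_index.
Qed.

Lemma exists_cut_witness (i : 'I_m) : exists z, [/\ z \in A, z \notin B & c i z != 0].
Proof.
have [j ji] : exists j : 'I_m, j != i.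
  have m1 : (1 < m)%N by rewrite -dim_fullv.
  have m0 : (0 < m)%N := ltnW m1.
  case: (eqVneq (val i) 0%N) => i0.
    by exists (Ordinal m1); apply/eqP => /(congr1 val) /=; rewrite i0.
  by exists (Ordinal m0); apply: contra i0 => /eqP <-.
have [p [pth lst]] := connB (nthB_in i) (nthB_in j).
case: p pth lst => [_ /= /nthB_inj ij|y p /= /andP [e _] _]; first by rewrite ij eqxx in ji.
move: e => /and4P [_ _ _ /hasP [z zA /and3P [zB zi _]]].
by exists z; split => //; rewrite -ipB_nth.
Qed.

Definition cut_witness (i : 'I_m) : V := proj1_sig (cid (exists_cut_witness i)).

Lemma cut_witnessP i :
  [/\ cut_witness i \in A, cut_witness i \notin B & c i (cut_witness i) != 0].
Proof. exact: proj2_sig (cid (exists_cut_witness i)). Qed.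

Definition cut_normal (i : 'I_m) : V := (c i (cut_witness i))^-1 *: cut_witness i.

Lemma coord_cut_normal i : c i (cut_normal i) = 1.
Proof. by rewrite linearZ /= mulVf //; case: (cut_witnessP i). Qed.

Definition cut_coef (i j : 'I_m) : R := c j (cut_normal i).

Lemma ip_cut_normal i x : ip (cut_normal i) x = \sum_(j < m) cut_coef i j * c j x.
Proof. by []. Qed.

Lemma ip_cut_normal_nthB (i j : 'I_m) : ip (cut_normal i) B`_j = cut_coef i j.
Proof. by rewrite ipBC (ipB_nth basB). Qed.

(* The box heights r^j decrease so fast that on a corner of the box the first
   nonzero coordinate dominates [cut_normal i, x]_B; the slab height is smaller than
   every box height, and spike *: b_j lies in the polytope. *)
Definition cut_bound : R := 1 + \sum_(i < m) \sum_(j < m) `|cut_coef i j|.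
Definition ratio : R := (2 * cut_bound)^-1.
Definition box_height (j : 'I_m) : R := ratio ^+ j.
Definition slab_height : R := ratio ^+ m / 4%:R.
Definition spike : R := slab_height / cut_bound.

Lemma sum_cut_coef_le i : \sum_(j < m) `|cut_coef i j| <= cut_bound.
Proof.
rewrite /cut_bound [X in _ <= 1 + X](bigD1 i) //= addrCA lerDl addr_ge0 ?ler01 //.
by apply: sumr_ge0 => i' _; apply: sumr_ge0.
Qed.

Lemma cut_coef_le i j : `|cut_coef i j| <= cut_bound.
Proof.
apply: le_trans (sum_cut_coef_le i); rewrite (bigD1 j) //= lerDl.
by apply: sumr_ge0.
Qed.

Lemma cut_bound_ge1 : 1 <= cut_bound.
Proof. by rewrite /cut_bound lerDl; apply: sumr_ge0 => i _; apply: sumr_ge0. Qed.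

Lemma cut_bound_gt0 : 0 < cut_bound.
Proof. exact: lt_le_trans ltr01 cut_bound_ge1. Qed.

Lemma ratio_gt0 : 0 < ratio.
Proof. by rewrite invr_gt0 mulr_gt0 ?cut_bound_gt0. Qed.

Lemma ratio_cut_bound : ratio * cut_bound = 2%:R^-1.
Proof. by rewrite /ratio invfM -mulrA mulVf ?mulr1 // gt_eqF // cut_bound_gt0. Qed.

Lemma ratio_le1 : ratio <= 1.
Proof.
have : ratio <= ratio * cut_bound by rewrite ler_pMr ?ratio_gt0 ?cut_bound_ge1.
by rewrite ratio_cut_bound => /le_trans; apply; rewrite invf_le1 ?ltr0n ?ler1n.
Qed.

Lemma ratio_exp_le (i j : nat) : (i <= j)%N -> ratio ^+ j <= ratio ^+ i.
Proof. by apply: ler_wiXn2l; [exact: ltW ratio_gt0 | exact: ratio_le1]. Qed.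

Lemma box_height_gt0 j : 0 < box_height j.
Proof. by rewrite exprn_gt0 // ratio_gt0. Qed.

Lemma slab_height_gt0 : 0 < slab_height.
Proof. by rewrite divr_gt0 ?exprn_gt0 ?ratio_gt0 ?ltr0n. Qed.

Lemma slab_height_le (i : 'I_m) : slab_height <= ratio ^+ i / 4%:R.
Proof. by rewrite ler_pM2r ?invr_gt0 ?ltr0n // ratio_exp_le // ltnW. Qed.

Lemma spike_gt0 : 0 < spike.
Proof. by rewrite divr_gt0 ?slab_height_gt0 ?cut_bound_gt0. Qed.

Lemma spike_cut_bound : spike * cut_bound = slab_height.
Proof. by rewrite divfK // gt_eqF // cut_bound_gt0. Qed.

Lemma spike_lt_box j : spike < box_height j.
Proof.
have : spike <= slab_height.
  by rewrite -spike_cut_bound ler_peMr ?cut_bound_ge1 // ltW // spike_gt0.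
move=> /le_lt_trans; apply; apply: le_lt_trans (slab_height_le j) _.
by rewrite ltr_pdivrMr ?ltr0n // ltr_pMr ?box_height_gt0 // ltr1n.
Qed.

(* The constraint (j, (false, false)) reads -c_j(x) <= 0, (j, (false, true)) reads
   c_j(x) <= box_height j and (j, (true, s)) reads +-[cut_normal j, x]_B <= slab_height. *)
Definition constraint := ('I_m * (bool * bool))%type.
Definition sgn (b : bool) : R := if b then 1 else -1.
Definition normal_base (k : constraint) : V :=
  if k.2.1 then cut_witness k.1 else B`_k.1.
Definition normal (k : constraint) : V :=
  sgn k.2.2 *: (if k.2.1 then cut_normal k.1 else B`_k.1).
Definition height (k : constraint) : R :=
  if k.2.1 then slab_height else if k.2.2 then box_height k.1 else 0.
Local Notation polytope := (polyhedron B normal height).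
Definition face (k : constraint) : set V := hyperface B polytope (normal k) (height k).

Lemma sgn_neq0 b : sgn b != 0.
Proof. by case: b; rewrite /sgn ?oppr_eq0 oner_eq0. Qed.

Lemma ip_normal_box i sg x : ip (normal (i, (false, sg))) x = sgn sg * c i x.
Proof. by rewrite /normal /= ipBZl ipB_nth. Qed.

Lemma ip_normal_slab i sg x :
  ip (normal (i, (true, sg))) x = sgn sg * ip (cut_normal i) x.
Proof. by rewrite /normal /= ipBZl. Qed.

Lemma polytope_coord_ge0 x i : polytope x -> 0 <= c i x.
Proof. by move=> /(_ (i, (false, false))); rewrite ip_normal_box /= mulN1r oppr_le0. Qed.

Lemma polytope_slab x i : polytope x -> `|ip (cut_normal i) x| <= slab_height.
Proof.
move=> Cx; have := Cx (i, (true, true)); have := Cx (i, (true, false)).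
rewrite !ip_normal_slab /= mul1r mulN1r => lo hi.
by rewrite ler_norml hi andbT lerNl.
Qed.

Lemma in_polytope x : (forall i, 0 <= c i x) -> (forall i, c i x <= box_height i) ->
  (forall i, `|ip (cut_normal i) x| <= slab_height) -> polytope x.
Proof.
move=> lo hi slab [i [[] []]]; rewrite ?ip_normal_slab ?ip_normal_box /= ?mul1r ?mulN1r.
- exact: le_trans (ler_norm _) (slab i).
- by apply: le_trans (slab i); rewrite -normrN ler_norm.
- exact: hi.
- by rewrite oppr_le0.
Qed.

Lemma polytope0 : polytope 0.
Proof.
apply: in_polytope => i; rewrite ?linear0 ?ipB0r ?normr0 //.
- exact: ltW (box_height_gt0 i).
- exact: ltW slab_height_gt0.
Qed.

Lemma spike_in_polytope (j : 'I_m) : polytope (spike *: B`_j).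
Proof.
apply: in_polytope => i; rewrite ?linearZ /= ?coordB.
- by rewrite mulr_ge0 ?ler0n ?(ltW spike_gt0).
- case: (j == i); rewrite ?mulr1 ?mulr0; [exact/ltW/spike_lt_box | exact/ltW/box_height_gt0].
- rewrite ipBZr ip_cut_normal_nthB normrM gtr0_norm ?spike_gt0 // -spike_cut_bound.
  by rewrite ler_pM2l ?spike_gt0 // cut_coef_le.
Qed.

Lemma normal_bound d : d != 0 -> exists k, 0 < ip (normal k) d.
Proof.
move=> d0; have [j cj] : exists j, c j d != 0.
  apply: contrapT => nj; apply: (negP d0); apply/eqP; apply: (coordB_eq0 basB) => j.
  by apply: contrapT => /eqP e; apply: nj; exists j.
case: (ltrgtP (c j d) 0) => e; last by rewrite e eqxx in cj.
  by exists (j, (false, false)); rewrite ip_normal_box mulN1r oppr_gt0.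
by exists (j, (false, true)); rewrite ip_normal_box mul1r.
Qed.

Lemma normal_scaled_base k : exists2 mu, mu != 0 & normal k = mu *: normal_base k.
Proof.
case: k => i [[] sg]; rewrite /normal /normal_base /=.
  exists (sgn sg * (c i (cut_witness i))^-1); last by rewrite /cut_normal scalerA.
  by rewrite mulf_eq0 negb_or sgn_neq0 invr_eq0; case: (cut_witnessP i).
by exists (sgn sg); first exact: sgn_neq0.
Qed.

Lemma normal_base_in_A k : normal_base k \in A.
Proof.
by rewrite /normal_base; case: ifP => _; [case: (cut_witnessP k.1) | apply/BA/nthB_in].
Qed.

Lemma normal_neq0 k : normal k != 0.
Proof.
have [mu mu0 ->] := normal_scaled_base k; rewrite scaler_eq0 negb_or mu0 /=.
by apply: contraNneq A0 => <-; exact: normal_base_in_A.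
Qed.

Lemma normal_parallel_nthB k (j : 'I_m) l : normal k = l *: B`_j -> k = (j, (false, k.2.2)).
Proof.
have [mu mu0 ->] := normal_scaled_base k => e.
have base_j : normal_base k = (l / mu) *: B`_j.
  by rewrite -[normal_base k](scalerK mu0) e scalerA mulrC.
have : normal_base k = B`_j.
  apply/eqP; apply: contraT => ne.
  have := A_nonparallel (normal_base_in_A k) (BA (nthB_in j)) ne (l / mu).
  by rewrite base_j eqxx.
case: k {e base_j} => i [[] sg]; rewrite /normal_base /=.
  by case: (cut_witnessP i) => _ /negP nB _ wj; case: nB; rewrite wj nthB_in.
by move/nthB_inj ->.
Qed.

(* Let i be the first index with c_i(w) = r^i; the later coordinates are at most
   r^(i+1), so [cut_normal i, w]_B >= r^i - cut_bound r^(i+1) = r^i / 2, which exceeds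
   the slab height. *)
Lemma box_corner_eq0 w : polytope w ->
  (forall j, c j w = 0 \/ c j w = box_height j) -> w = 0.
Proof.
move=> Cw corner; apply: (coordB_eq0 basB) => j0; apply: contrapT => /eqP nz0.
have [i nzi imin] := @arg_minnP _ j0 (fun j : 'I_m => c j w != 0) val nz0.
have wi : c i w = box_height i by case: (corner i) nzi => // ->; rewrite eqxx.
have later j : j != i -> `|cut_coef i j * c j w| <= `|cut_coef i j| * ratio ^+ i.+1.
  move=> ji; rewrite normrM; apply: ler_wpM2l => //.
  case: (corner j) => wj; first by rewrite wj normr0 exprn_ge0 // ltW // ratio_gt0.
  rewrite wj ger0_norm ?(ltW (box_height_gt0 _)) //; apply: ratio_exp_le.
  have le_ij : (i <= j)%N by apply: imin; rewrite wj gt_eqF ?box_height_gt0.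
  by rewrite ltn_neqAle le_ij andbT; apply: contra ji => /eqP /val_inj ->.
set rest := \sum_(j < m | j != i) cut_coef i j * c j w.
have ipE : ip (cut_normal i) w = box_height i + rest.
  by rewrite ip_cut_normal (bigD1 i) //= /cut_coef coord_cut_normal mul1r wi.
have rest_le : `|rest| <= ratio ^+ i / 2%:R.
  apply: le_trans (ler_norm_sum _ _ _) _; apply: le_trans (ler_sum _ later) _.
  rewrite -mulr_suml.
  have -> : ratio ^+ i / 2%:R = cut_bound * ratio ^+ i.+1.
    by rewrite exprS mulrA [cut_bound * _]mulrC ratio_cut_bound mulrC.
  apply: ler_wpM2r; first by rewrite exprn_ge0 // ltW // ratio_gt0.
  apply: le_trans (sum_cut_coef_le i); rewrite [X in _ <= X](bigD1 i) //= lerDr.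
  exact: normr_ge0.
have := polytope_slab i Cw; have := slab_height_le i; have := box_height_gt0 i.
have := ler_norm (ip (cut_normal i) w); have : - rest <= `|rest| by rewrite -normrN ler_norm.
rewrite ipE /box_height; lra.
Qed.

Lemma coord_sum_nthB (j : 'I_m) : c j (\sum_(i < m) B`_i) = 1.
Proof.
rewrite linear_sum (bigD1 j) //= coordB eqxx big1 ?addr0 // => i ij.
by rewrite coordB (negbTE ij).
Qed.

Definition center : V := (spike / 2%:R) *: \sum_(j < m) B`_j.

Lemma center_strict k : ip (normal k) center < height k.
Proof.
have half_spike : 0 < spike / 2%:R by rewrite divr_gt0 ?spike_gt0 ?ltr0n.
case: k => i [[] sg] /=.
  have slab : `|ip (cut_normal i) center| < slab_height.
    rewrite ipBZr ipB_sumr normrM (gtr0_norm half_spike).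
    apply: (le_lt_trans (y := spike / 2%:R * cut_bound)).
      apply: ler_wpM2l; first exact: ltW.
      apply: le_trans (ler_norm_sum _ _ _) _.
      under eq_bigr do rewrite ip_cut_normal_nthB.
      exact: sum_cut_coef_le.
    rewrite mulrAC spike_cut_bound ltr_pdivrMr ?ltr0n // ltr_pMr ?slab_height_gt0 //.
    by rewrite ltr1n.
  rewrite ip_normal_slab; case: sg; rewrite /sgn ?mul1r ?mulN1r; apply: le_lt_trans slab.
    exact: ler_norm.
  by rewrite -normrN ler_norm.
rewrite ip_normal_box /center linearZ /= coord_sum_nthB mulr1.
case: sg; rewrite /sgn ?mul1r ?mulN1r; last by rewrite oppr_lt0.
apply: lt_trans (spike_lt_box i).
by rewrite ltr_pdivrMr ?ltr0n // ltr_pMr ?spike_gt0 // ltr1n.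
Qed.

Lemma vertex0 : is_vertex B polytope 0.
Proof.
have m0 : (0 < m)%N by rewrite -dim_fullv ltnW.
have sum_coord x : ip (- \sum_(j < m) B`_j) x = - \sum_(j < m) c j x.
  by rewrite ipBNl ipBC ipB_sumr; under eq_bigr do rewrite ipBC (ipB_nth basB).
exists (- \sum_(j < m) B`_j), 0; split.
  rewrite oppr_eq0; apply/eqP => /(congr1 (coord (in_tuple B) (Ordinal m0))).
  by rewrite coord_sum_nthB linear0; apply/eqP; rewrite oner_eq0.
split.
  move=> x Cx; rewrite sum_coord oppr_le0.
  by apply: sumr_ge0 => j _; apply: polytope_coord_ge0.
apply/seteqP; split => x; last by move=> /= ->; split; [exact: polytope0 | rewrite ipB0r].
move=> [Cx]; rewrite sum_coord => /eqP; rewrite oppr_eq0 => /eqP sum0 /=.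
apply: (coordB_eq0 basB) => j.
by apply: (psumr_eq0P (P := predT) (F := fun j => c j x)) => // i _; apply: polytope_coord_ge0.
Qed.

Lemma facet_normal_in_A G : is_facet B polytope G ->
  exists2 a, a \in A & facet_normal B polytope G a.
Proof.
move=> /(facet_eq_constraint_face basB normal_bound normal_neq0) [k ->].
have [mu mu0 nE] := normal_scaled_base k.
exists (normal_base k); first exact: normal_base_in_A.
exists (height k / mu); split; last by rewrite /face nE hyperface_scale.
have Ck x : polytope x -> mu * ip (normal_base k) x <= height k.
  by move=> /(_ k); rewrite nE ipBZl.
case: (ltrgtP mu 0) => mu_sgn; last by rewrite mu_sgn eqxx in mu0.
  by right => x /Ck; rewrite ipBNl lerN2 ler_ndivrMr // mulrC.
by left => x /Ck; rewrite ler_pdivlMr // mulrC.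
Qed.

Lemma coord_faceP (j : 'I_m) x : face (j, (false, false)) x <-> polytope x /\ c j x = 0.
Proof.
rewrite /face /hyperface /= ip_normal_box mulN1r.
by split=> -[Cx e]; split => //; [apply: oppr_inj; rewrite oppr0 | rewrite e oppr0].
Qed.

Lemma coord_face_facet (j : 'I_m) : is_facet B polytope (face (j, (false, false))).
Proof.
exists (normal (j, (false, false))), 0; split; first exact: normal_neq0.
split; first by move=> x /(_ (j, (false, false))).
split=> //.
pose spikes := [seq spike *: b | b <- B].
pose y := spike *: B`_j.
have free_spikes : free spikes := free_scale (lt0r_neq0 spike_gt0) (basis_free basB).
have y_spikes : y \in spikes by apply: map_f; apply: nthB_in.
exists 0, (filter (predC1 y) spikes); split.
  rewrite dim_fullv size_filter.
  have := count_predC (pred1 y) spikes.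
  by rewrite (count_uniq_mem _ (free_uniq free_spikes)) y_spikes size_map add1n => <-.
split; first by rewrite (eq_map (fun x => subr0 x)) map_id filter_free.
split; first by apply/coord_faceP; split; [exact: polytope0 | rewrite linear0].
move=> x; rewrite mem_filter => /andP [xy /mapP [b bB xb]].
have [i bi] := nthB_index bB.
apply/coord_faceP; rewrite xb bi; split; first exact: spike_in_polytope.
rewrite linearZ /= coordB; case: (eqVneq i j) => [ij|_]; last by rewrite mulr0.
by move: xy; rewrite /= xb bi ij eqxx.
Qed.

Lemma coord_face_normal (j : 'I_m) :
  facet_normal B polytope (face (j, (false, false))) B`_j.
Proof.
exists 0; split; last by rewrite /face [normal _]/normal hyperface_scale ?sgn_neq0 //= mul0r.
right; rewrite oppr0 => x Cx.
by rewrite ipBNl (ipB_nth basB) oppr_le0 polytope_coord_ge0.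
Qed.

Lemma coord_face_inj : injective (fun j : 'I_m => face (j, (false, false))).
Proof.
move=> i j /= e; apply/eqP/contraT => ij.
have : face (i, (false, false)) (spike *: B`_j).
  apply/coord_faceP; rewrite linearZ /= coordB eq_sym (negbTE ij) mulr0.
  by split; first exact: spike_in_polytope.
rewrite e => /coord_faceP [_]; rewrite linearZ /= coordB eqxx mulr1 => /eqP.
by rewrite gt_eqF // spike_gt0.
Qed.

Lemma facet_through0 G : is_facet B polytope G -> G 0 ->
  exists j, G = face (j, (false, false)).
Proof.
move=> /(facet_eq_constraint_face basB normal_bound normal_neq0) [[i [[] sg]] ->] [_].
  by rewrite ipB0r /= => /esym /eqP; rewrite gt_eqF // slab_height_gt0.
case: sg; last by exists i.
by rewrite ipB0r /= => /esym /eqP; rewrite gt_eqF // box_height_gt0.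
Qed.

Lemma prop_ii0 : prop_ii B polytope 0.
Proof.
pose F i := face (cast_ord dim_fullv i, (false, false)).
exists F; split; first by move=> i i' /coord_face_inj /cast_ord_inj.
split.
  move=> i; split; first exact: coord_face_facet.
  split; first by apply/coord_faceP; split; [exact: polytope0 | rewrite linear0].
  by exists B`_(cast_ord dim_fullv i); [exact: nthB_in | exact: coord_face_normal].
move=> G fG G0; have [j ->] := facet_through0 fG G0.
by exists (cast_ord (esym dim_fullv) j); rewrite /F cast_ordKV.
Qed.

Lemma facet_normal_nthB G b : is_facet B polytope G -> b \in B ->
  facet_normal B polytope G b -> exists j sg, G = face (j, (false, sg)).
Proof.
move=> fG /nthB_index [j ->] [c0 [sup GE]].
have [k [l [_ [nl E]]]] : exists k l, l != 0 /\ normal k = l *: B`_j /\ G = face k.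
  have fc := facet_constraint basB normal_bound normal_neq0 fG.
  case: sup => sup; first exact: fc _ _ (nthB_neq0 j) sup GE.
  have GE' : G = hyperface B polytope (- B`_j) (- c0).
    by rewrite GE -scaleN1r hyperface_scale ?oppr_eq0 ?oner_eq0 // invrN1 mulrN1 opprK.
  have Nbj0 : - B`_j != 0 by rewrite oppr_eq0 nthB_neq0.
  have [k [l [l0 [nl E]]]] := fc _ _ Nbj0 sup GE'.
  by exists k, (- l); split; [rewrite oppr_eq0 | split => //; rewrite nl scalerN scaleNr].
by exists j, k.2.2; rewrite E -(normal_parallel_nthB nl).
Qed.

Lemma prop_ii_coords w : prop_ii B polytope w ->
  forall j, c j w = 0 \/ c j w = box_height j.
Proof.
move=> [F [F_inj [F_facets _]]].
have box_facet i : exists p : 'I_m * bool, F i = face (p.1, (false, p.2)).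
  have [Fi_facet [_ [b bB Fi_b]]] := F_facets i.
  by have [j [sg ->]] := facet_normal_nthB Fi_facet bB Fi_b; exists (j, sg).
pose g i := proj1_sig (cid (box_facet i)).
have gP i : F i = face ((g i).1, (false, (g i).2)) := proj2_sig (cid (box_facet i)).
have w_coord i : c (g i).1 w = if (g i).2 then box_height (g i).1 else 0.
  have [_ [wF _]] := F_facets i; rewrite gP in wF; case: wF => _.
  rewrite ip_normal_box; case: (g i).2; rewrite /= ?mul1r ?mulN1r // => /eqP.
  by rewrite oppr_eq0 => /eqP.
have g_inj : injective (fun i => (g i).1).
  move=> i i' /= gii'; apply: F_inj; rewrite !gP gii'.
  suff -> : (g i).2 = (g i').2 by [].
  have := box_height_gt0 (g i').1; move: (w_coord i) (w_coord i'); rewrite gii'.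
  by case: (g i).2; case: (g i').2 => // -> ->; rewrite ltxx.
have card_le : (#|'I_m| <= #|'I_(\dim (fullv : {vspace V}))|)%N by rewrite !card_ord dim_fullv.
move=> j; have /codomP [i ->] := inj_card_onto g_inj card_le j.
by rewrite w_coord; case: (g i).2; [right | left].
Qed.

Lemma prop_ii_eq0 w : prop_ii B polytope w -> w = 0.
Proof.
move=> ii_w; apply: box_corner_eq0 (prop_ii_coords ii_w).
have [F [_ [F_facets _]]] := ii_w.
have [[u [c0 [_ [_ [FE _]]]]] [wF _]] := F_facets (Ordinal (ltnW dim_gt1)).
by rewrite FE in wF; case: wF.
Qed.

Lemma polytope_exists : exists P : seq V,
    nonempty_interior B (conv P) /\
    (forall F, is_facet B (conv P) F -> exists2 a, a \in A & facet_normal B (conv P) F a) /\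
    exists v, is_vertex B (conv P) v /\ prop_ii B (conv P) v /\
      (forall w, is_vertex B (conv P) w -> prop_ii B (conv P) w -> w = v).
Proof.
exists (basic_points B normal height); rewrite (conv_basic_points height normal_bound).
split; first exact: strict_point_nonempty_interior center_strict.
split; first exact: facet_normal_in_A.
exists 0; split; first exact: vertex0.
split; first exact: prop_ii0.
by move=> w _ /prop_ii_eq0.
Qed.

End Construction.

Unset Implicit Arguments.

Theorem mainTheorem11 (R : realType) (V : vectType R) (A B : seq V) :
  (1 < \dim (fullv : {vspace V}))%N ->
  uniq A -> (<<A>>%VS = fullv) -> 0 \notin A ->
  (forall a b, a \in A -> b \in A -> a != b -> forall k : R, a != k *: b) ->
  {subset B <= A} -> basis_of fullv B ->
  Gconnected A B ->
  exists P : seq V,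
    nonempty_interior B (conv P) /\
    (forall F, is_facet B (conv P) F -> exists2 a, a \in A & facet_normal B (conv P) F a) /\
    exists v, is_vertex B (conv P) v /\ prop_ii B (conv P) v /\
      (forall w, is_vertex B (conv P) w -> prop_ii B (conv P) w -> w = v).
Proof.
move=> dim_gt1 _ _ A0 A_nonparallel BA basB connB.
exact: polytope_exists dim_gt1 A0 A_nonparallel BA basB connB.
Qed.
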